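(* Fix FG declarations $\overline{D}$ and a TL method substitution $\sigma_m$. If $\overline{D}\approx_k\sigma_m$ and $k'\le k$, then $\overline{D}\approx_{k'}\sigma_m$.
   Context: Featherweight Go (FG). Field names $f$, method names $m$, variables $x$, structure type names $t_S,u_S$, interface type names $t_I,u_I$; types $t,u$ range over both kinds of names. A method signature is $M = (x_1\,t_1,\ldots,x_n\,t_n)\,t$; a method specification is $m M$. Expressions: $e ::= x \mid e.m(e_1,\ldots,e_n) \mid t_S\{e_1,\ldots,e_n\} \mid e.f \mid e.(t)$. Declarations: $\mathtt{type}\ t_S\ \mathtt{struct}\{f_1\,t_1 \ldots f_n\,t_n\}$, $\mathtt{type}\ t_I\ \mathtt{interface}\{S_1 \ldots S_q\}$ (in this order), and method declarations $\mathtt{func}\ (x\ t_S)\ m M\ \{\mathtt{return}\ e\}$, each uniquely identified by receiver type and method name. $\mathrm{methods}(\overline{D},t_S)=\{mM \mid \mathtt{func}\ (x\ t_S)\ mM\{\ldots\}\in\overline{D}\}$; $\mathrm{methods}(\overline{D},t_I)$ is the set of specifications of $t_I$. Subtyping: $t_S<:t_S$, and $t<:u_I$ iff $\mathrm{methods}(\overline{D},t)\supseteq\mathrm{methods}(\overline{D},u_I)$. $\mathrm{methodLookup}(\overline{D},(m,t_S))$ is the unique declaration $\mathtt{func}\ (x\ t_S)\ mM\{\ldots\}\in\overline{D}$. FG values $v ::= t_S\{v_1,\ldots,v_n\}$; reduction $\overline{D}\vdash d\longrightarrow e$ is closed under evaluation contexts $\mathcal{E} ::= [\,] \mid t_S\{\overline{v},\mathcal{E},\overline{e}\}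 \mid \mathcal{E}.f \mid \mathcal{E}.(t) \mid \mathcal{E}.m(\overline{e}) \mid v.m(\overline{v},\mathcal{E},\overline{e})$ with rules $t_S\{v_1..v_n\}.f_i\longrightarrow v_i$; $v.m(v_1..v_n)\longrightarrow[x\mapsto v,x_i\mapsto v_i]e$ if $v=t_S\{\ldots\}$ and $\mathtt{func}\ (x\ t_S)\ m(x_1t_1..x_nt_n)t\{\mathtt{return}\ e\}\in\overline{D}$; $v.(t)\longrightarrow v$ if $v=t_S\{\ldots\}$ and $t_S<:t$. $\overline{D}\vdash e\longrightarrow^{\le k}v$: reduction to value $v$ in at most $k$ steps. Target language (TL): $E ::= X\mid K\mid E\,E\mid\lambda X.E\mid\mathtt{case}\ E\ \mathtt{of}\ [Pat_1\to E_1,\ldots]$, $Pat ::= K\,X_1..X_n$, tuples $(E_1,..,E_n)$. TL values $V ::= X\mid K\,V_1..V_n$. With method substitution $\sigma_m$ (variables to $\lambda$-abstractions), $\sigma_m\vdash E\longrightarrow E'$ is closed under contexts $R ::= [\,]\mid K\,\overline{V}\,R\,\overline{E}\mid\mathtt{case}\ R\ \mathtt{of}\ [\ldots]\mid R\,E\mid V\,R$ with rules $(\lambda X.E)V\longrightarrow[X\mapsto V]E$; $\mathtt{case}\ K\,V_1..V_n\ \mathtt{of}\ [\ldots]\longrightarrow[X_i\mapsto V_i]E'$ for clause $K\,X_1..X_n\to E'$; $Y\,E\longrightarrow\sigma_m(Y)\,E$. $\sigma_m\vdash E\longrightarrow^{\le k}V$ analogously. Constructors $K_{t_S}$, $K_{t_I}$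 for structs and interfaces; the method declaration of $m$ for receiver $t_S$ has a TL variable $m_{t_S}$. Step-indexed logical relation (relative to $\overline{D}$, $\sigma_m$): (Exp) $\models_k t:e\approx E$ holds if for all $k_1<k$, $k_2<k$, $v$, $V$ with $k-k_1-k_2>0$, $\overline{D}\vdash e\longrightarrow^{\le k_1}v$ and $\sigma_m\vdash E\longrightarrow^{\le k_2}V$, we have $\models_{k-k_1-k_2}t:v\approx V$. (Struct) $\models_k t_S:t_S\{v_1..v_n\}\approx K_{t_S}(V_1,..,V_n)$ if $\mathtt{type}\ t_S\ \mathtt{struct}\{f_1t_1..f_nt_n\}\in\overline{D}$ and $\models_k t_i:v_i\approx V_i$ for all $i$. (Iface) $\models_k t_I:v\approx K_{t_I}(V,V_1,..,V_n)$ if $V=K_{u_S}\overline{V'}$ for a struct $u_S$, $\models_{k_1}u_S:v\approx V$ for all $k_1<k$, $\mathrm{methods}(\overline{D},t_I)=\{m_1M_1,..,m_nM_n\}$ (declaration order), and $\models_{k_2}m_iM_i:\mathrm{methodLookup}(\overline{D},(m_i,u_S))\approx V_i$ for all $k_2<k$, $i$. (Method) $\models_k m(x_1t_1..x_nt_n)t:\mathtt{func}\ (x\ t_S)\ m(x_1t_1..x_nt_n)t\{\mathtt{return}\ e\}\approx V$ holds iff for all $k'\le k$ and $v',V',v_i,V_i$ with $\models_{k'}t_S:v'\approx V'$ and $\models_{k'}t_i:v_i\approx V_i$ for all $i$, we have $\models_{k'}t:[x\mapsto v',x_i\mapsto v_i]e\approx(V\,V')(V_1,..,V_n)$. (Decls)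 $\overline{D}\approx_k\sigma_m$ iff for every $\mathtt{func}\ (x\ t_S)\ mM\{\mathtt{return}\ e\}\in\overline{D}$, $\models_k mM:\mathtt{func}\ (x\ t_S)\ mM\{\mathtt{return}\ e\}\approx m_{t_S}$ (the TL variable). *)

From Stdlib Require Import List Arith PeanoNat Lia Bool.
Import ListNotations.
Set Implicit Arguments.

Definition name := nat.

Inductive ty : Type :=
| TStruct (s : name)
| TIface (i : name).

Definition sig : Type := (list (name * ty) * ty)%type.
Definition mspec : Type := (name * sig)%type.

Inductive expr : Type :=
| EVar (x : name)
| ECall (e : expr) (m : name) (args : list expr)
| EStruct (s : name) (args : list expr)
| EField (e : expr) (f : name)
| EAssert (e : expr) (t : ty).

Inductive decl : Type :=
| DStruct (s : name) (fields : list (name * ty))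
| DIface (i : name) (specs : list mspec)
| DMethod (x : name) (s : name) (m : name) (M : sig) (body : expr).
                               (* func (x tS) m M {return body} *)

Definition decls := list decl.

Section FG.
Variable D : decls.

Fixpoint struct_fields (ds : decls) (s : name) : option (list (name * ty)) :=
  match ds with
  | [] => None
  | DStruct s' fs :: ds' => if Nat.eqb s s' then Some fs else struct_fields ds' s
  | _ :: ds' => struct_fields ds' s
  end.

Fixpoint iface_specs (ds : decls) (i : name) : list mspec :=
  match ds with
  | [] => []
  | DIface i' ss :: ds' => if Nat.eqb i i' then ss else iface_specs ds' i
  | _ :: ds' => iface_specs ds' i
  end.

Definition methods (t : ty) : list mspec :=
  match t with
  | TStruct s =>
      flat_map (fun d => match d with
                         | DMethod _ s' m M _ => if Nat.eqb s s' then [(m, M)] else []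
                         | _ => []
                         end) D
  | TIface i => iface_specs D i
  end.

Definition subtype (t u : ty) : Prop :=
  match u with
  | TStruct s => t = TStruct s
  | TIface _ => incl (methods u) (methods t)
  end.

(* methodLookup(D, (m, tS)) : the (first, and by assumption unique)
   method declaration with receiver type tS and method name m *)
Definition method_lookup (m s : name) : option decl :=
  find (fun d => match d with
                 | DMethod _ s' m' _ _ => andb (Nat.eqb s s') (Nat.eqb m m')
                 | _ => false
                 end) D.

Inductive value : expr -> Prop :=
| VStruct s vs : Forall value vs -> value (EStruct s vs).

(* simultaneous substitution of (closed) values for variables *)
Fixpoint lookup_var (env : list (name * expr)) (x : name) : option expr :=
  match env with
  | [] => None
  | (y, v) :: env' => if Nat.eqb x y then Some v else lookup_var env' x
  end.

Fixpoint subst (env : list (name * expr)) (e : expr) : expr :=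
  match e with
  | EVar x => match lookup_var env x with Some v => v | None => EVar x end
  | ECall e0 m es => ECall (subst env e0) m (map (subst env) es)
  | EStruct s es => EStruct s (map (subst env) es)
  | EField e0 f => EField (subst env e0) f
  | EAssert e0 t => EAssert (subst env e0) t
  end.

Inductive fstep : expr -> expr -> Prop :=
| FS_field s vs fs i f t v :
    Forall value vs ->
    struct_fields D s = Some fs -> length fs = length vs ->
    nth_error fs i = Some (f, t) -> nth_error vs i = Some v ->
    fstep (EField (EStruct s vs) f) v
| FS_call s vs m vargs x ps t e :
    value (EStruct s vs) -> Forall value vargs ->
    In (DMethod x s m (ps, t) e) D -> length ps = length vargs ->
    fstep (ECall (EStruct s vs) m vargs)
          (subst ((x, EStruct s vs) :: combine (map fst ps) vargs) e)
| FS_assert s vs t :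
    value (EStruct s vs) -> subtype (TStruct s) t ->
    fstep (EAssert (EStruct s vs) t) (EStruct s vs)
| FC_struct s vs e e' es :
    Forall value vs -> fstep e e' ->
    fstep (EStruct s (vs ++ e :: es)) (EStruct s (vs ++ e' :: es))
| FC_field e e' f : fstep e e' -> fstep (EField e f) (EField e' f)
| FC_assert e e' t : fstep e e' -> fstep (EAssert e t) (EAssert e' t)
| FC_recv e e' m es : fstep e e' -> fstep (ECall e m es) (ECall e' m es)
| FC_arg v m vs e e' es :
    value v -> Forall value vs -> fstep e e' ->
    fstep (ECall v m (vs ++ e :: es)) (ECall v m (vs ++ e' :: es)).

Inductive fsteps : nat -> expr -> expr -> Prop :=
| FSS_refl e : fsteps 0 e e
| FSS_step n e1 e2 e3 : fstep e1 e2 -> fsteps n e2 e3 -> fsteps (S n) e1 e3.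

Definition fsteps_le (k : nat) (e v : expr) : Prop :=
  exists n, n <= k /\ fsteps n e v /\ value v.

End FG.

(* TL syntax (locally nameless: bound variables are de Bruijn indices,
   free variables are names) *)

(* TL free variables: the method variables m_{tS}, and other variables *)
Inductive tvar : Type :=
| TVMeth (m s : name)
| TVOther (x : name).

Inductive con : Type :=
| KStruct (s : name)
| KIface (i : name)
| KTuple (n : nat).

Inductive term : Type :=
| TBVar (i : nat)
| TFVar (x : tvar)
| TCon (K : con)
| TApp (E1 E2 : term)
| TLam (body : term)
| TCase (E : term) (cls : list (con * nat * term)).  (* clause K X1..Xn -> body *)

Definition capp (K : con) (Es : list term) : term := fold_left TApp Es (TCon K).
Definition tuple (Es : list term) : term := capp (KTuple (length Es)) Es.

(* opening a body with the values bound to its (innermost) binders *)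
Fixpoint open_rec (d : nat) (us : list term) (t : term) : term :=
  match t with
  | TBVar i => if i <? d then TBVar i
               else match nth_error us (i - d) with
                    | Some u => u
                    | None => TBVar (i - length us)
                    end
  | TFVar x => TFVar x
  | TCon K => TCon K
  | TApp t1 t2 => TApp (open_rec d us t1) (open_rec d us t2)
  | TLam b => TLam (open_rec (S d) us b)
  | TCase t0 cls =>
      TCase (open_rec d us t0)
            (map (fun c => match c with (K, n, b) => (K, n, open_rec (d + n) us b) end) cls)
  end.
Definition open (b : term) (us : list term) : term := open_rec 0 us b.

Inductive tvalue : term -> Prop :=
| TV_var x : tvalue (TFVar x)
| TV_con c : cvalue c -> tvalue c
with cvalue : term -> Prop :=
| CV_K K : cvalue (TCon K)
| CV_app c w : cvalue c -> tvalue w -> cvalue (TApp c w).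

(* method substitution: TL variables to lambda-abstractions *)
Definition msubst := tvar -> option term.

Section TL.
Variable sigma : msubst.

Inductive tstep : term -> term -> Prop :=
| TS_beta b V : tvalue V -> tstep (TApp (TLam b) V) (open b [V])
| TS_case K Vs cls n b :
    Forall tvalue Vs -> In (K, n, b) cls -> length Vs = n ->
    tstep (TCase (capp K Vs) cls) (open b Vs)
| TS_var Y L E : sigma Y = Some L -> tstep (TApp (TFVar Y) E) (TApp L E)
| TC_case E E' cls : tstep E E' -> tstep (TCase E cls) (TCase E' cls)
| TC_appl E E' F : tstep E E' -> tstep (TApp E F) (TApp E' F)
| TC_appr V E E' : tvalue V -> tstep E E' -> tstep (TApp V E) (TApp V E').
(* the context  K V1..Vj R E1..Em  is covered by TC_appl / TC_appr, since
   constructor applications are curried and K V1..Vj is a value *)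

Inductive tsteps : nat -> term -> term -> Prop :=
| TSS_refl E : tsteps 0 E E
| TSS_step n E1 E2 E3 : tstep E1 E2 -> tsteps n E2 E3 -> tsteps (S n) E1 E3.

Definition tsteps_le (k : nat) (E V : term) : Prop :=
  exists n, n <= k /\ tsteps n E V /\ tvalue V.

End TL.

Section Rel.
Variable D : decls.
Variable sigma : msubst.

Definition vrelT := nat -> ty -> expr -> term -> Prop.

Fixpoint rel_list (r : vrelT) (k : nat) (ts : list ty) (vs : list expr) (Vs : list term)
  : Prop :=
  match ts, vs, Vs with
  | [], [], [] => True
  | t :: ts', v :: vs', V :: Vs' => r k t v V /\ rel_list r k ts' vs' Vs'
  | _, _, _ => False
  end.

Definition exp_rel (r : vrelT) (k : nat) (t : ty) (e : expr) (E : term) : Prop :=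
  forall k1 k2 v V,
    k1 < k -> k2 < k -> k - k1 - k2 > 0 ->
    fsteps_le D k1 e v -> tsteps_le sigma k2 E V ->
    r (k - k1 - k2) t v V.

Definition meth_rel (r : vrelT) (k : nat) (spec : mspec) (d : decl) (W : term) : Prop :=
  match d with
  | DMethod x s m M e =>
      fst spec = m /\ snd spec = M /\
      forall k', k' <= k ->
        forall v' V' vs Vs,
          r k' (TStruct s) v' V' ->
          rel_list r k' (map snd (fst M)) vs Vs ->
          exp_rel r k' (snd M)
                  (subst ((x, v') :: combine (map fst (fst M)) vs) e)
                  (TApp (TApp W V') (tuple Vs))
  | _ => False
  end.

(* One layer of the value relation at index k, given the relation r at
   all strictly smaller indices (only r j with j < k is ever used). *)
Fixpoint vstep (r : vrelT) (k : nat) (t : ty) (v : expr) (V : term) {struct v} : Prop :=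
  match t with
  | TStruct s =>
      match v with
      | EStruct s' vs =>
          s' = s /\
          exists fs Vs,
            struct_fields D s = Some fs /\
            V = capp (KStruct s) Vs /\
            (fix go (ts : list ty) (vs : list expr) (Vs : list term) {struct vs} : Prop :=
               match ts, vs, Vs with
               | [], [], [] => True
               | t1 :: ts', v1 :: vs', V1 :: Vs' => vstep r k t1 v1 V1 /\ go ts' vs' Vs'
               | _, _, _ => False
               end) (map snd fs) vs Vs
      | _ => False
      end
  | TIface i =>
      exists u V's V0 Vms,
        V = capp (KIface i) (V0 :: Vms) /\
        V0 = capp (KStruct u) V's /\
        (forall k1, k1 < k -> r k1 (TStruct u) v V0) /\
        length Vms = length (methods D (TIface i)) /\
        (forall k2, k2 < k ->
           forall j spec Vj,
             nth_error (methods D (TIface i)) j = Some spec ->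
             nth_error Vms j = Some Vj ->
             exists d, method_lookup D (fst spec) u = Some d /\
                       meth_rel r k2 spec d Vj)
  end.

(* course-of-values construction: vrel_aux n k is the relation at index k
   for k < n *)
Fixpoint vrel_aux (n : nat) : vrelT :=
  match n with
  | 0 => fun _ _ _ _ => False
  | S n' => fun k => vstep (vrel_aux n') k
  end.

Definition vrel : vrelT := fun k => vrel_aux (S k) k.

Definition decls_rel (k : nat) : Prop :=
  forall x s m M e,
    In (DMethod x s m M e) D ->
    meth_rel vrel k (m, M) (DMethod x s m M e) (TFVar (TVMeth m s)).

End Rel.

From Stdlib Require Import List Arith Lia.

(* The (Method) clause already quantifies over every index [k' <= k]. *)
Lemma meth_rel_mono {D : decls} {sigma : msubst} {r : vrelT}
    {k k' : nat} {spec : mspec} {d : decl} {W : term} :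
  meth_rel D sigma r k spec d W -> k' <= k -> meth_rel D sigma r k' spec d W.
Proof.
  destruct d as [| | x s m M e]; simpl; try contradiction.
  intros [Hm [HM Hbody]] Hle.
  repeat split; try assumption.
  intros k'' Hk''. apply Hbody. lia.
Qed.

Theorem lemma7 (D : decls) (sigma : msubst) (k k' : nat) :
  decls_rel D sigma k -> k' <= k -> decls_rel D sigma k'.
Proof.
  intros Hrel Hle x s m M e Hin.
  exact (meth_rel_mono (Hrel x s m M e Hin) Hle).
Qed.
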